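(* Let $p=\infty$. For every finite $S\subset\mathcal X$ and every $t\ge 0$, \[ \mathrm{VR}_t(S,d_\theta)=\mathrm{VR}_t(S_{\mathcal C},\beta)\cup \mathrm{VR}_t(S_{\mathcal Y},d_{\mathrm{reg}})\cup\Bigl(\mathrm{VR}_t(S_{\mathcal C}^{\le t},\beta)\star \mathrm{VR}_t(S_{\mathcal Y}^{\le t},d_{\mathrm{reg}})\Bigr). \]
   Context: Let $A$ be a unital $C^*$-algebra, $H$ a Hilbert space, $\mathcal X=\mathrm{CB}(A,B(H))$, $\mathcal C=\mathrm{CP}(A,B(H))$ with Bures distance $\beta$. Fix $\theta\in\mathcal C$, $\lambda>0$, $\alpha\in(0,1]$, and let $d_\theta=\beta^{BK}_{\theta,\lambda,\infty,\alpha}$ be the Bures--Kuratowski metric with $p=\infty$. It satisfies $d_\theta=\beta$ on $\mathcal C$, $d_\theta=d_{\mathrm{reg}}:=\lambda\delta_{\mathrm{reg}}^\alpha$ on $\mathcal X\setminus\mathcal C$ ($\delta_{\mathrm{reg}}$ the regular-representation metric), and $d_\theta(x,y)=\max\{r_{\mathcal C}(x),r_{\mathcal Y}(y)\}$ for $x\in\mathcal C$, $y\notin\mathcal C$, where $r_{\mathcal C}(x)=\beta(x,\theta)$, $r_{\mathcal Y}(y)=\lambda\delta_{\mathrm{reg}}(y,0)^\alpha$. $S_{\mathcal C}=S\cap\mathcal C$, $S_{\mathcal Y}=S\cap(\mathcal X\setminus\mathcal C)$, $S_{\mathcal C}^{\le t}=\{x\in S_{\mathcal C}:r_{\mathcal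 C}(x)\le t\}$, $S_{\mathcal Y}^{\le t}=\{y\in S_{\mathcal Y}:r_{\mathcal Y}(y)\le t\}$. $\mathrm{VR}_t$ denotes the Vietoris--Rips complex (finite subsets of diameter $\le t$), and for complexes $K,L$ on disjoint vertex sets $K\star L=\{\sigma\cup\tau:\sigma\in K,\tau\in L,\ \sigma,\tau\neq\varnothing\}$. *)

From HB Require Import structures.
From mathcomp Require Import all_boot all_order all_algebra.
From mathcomp Require Import finmap.
From mathcomp Require Import reals exp.
Set Implicit Arguments. Unset Strict Implicit. Unset Printing Implicit Defensive.
Import Order.TTheory GRing.Theory Num.Theory.
Local Open Scope ring_scope.
Local Open Scope fset_scope.

(* A simplicial complex on vertices of type X is represented by its set of
   (nonempty, finite) faces, a predicate on {fset X}. *)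
Definition complex (X : choiceType) := {fset X} -> Prop.

Definition VR (R : realType) (X : choiceType) (d : X -> X -> R) (t : R)
  (S : {fset X}) : complex X :=
  fun s => [/\ s != fset0, s `<=` S & forall x y, x \in s -> y \in s -> d x y <= t].

Definition cunion (X : choiceType) (K L : complex X) : complex X :=
  fun s => K s \/ L s.

Definition join (X : choiceType) (K L : complex X) : complex X :=
  fun u => exists s t, [/\ K s, L t, s != fset0, t != fset0 & u = s `|` t].

Definition dreg (R : realType) (X : choiceType) (lam alpha : R)
  (delta : X -> X -> R) : X -> X -> R :=
  fun x y => lam * powR (delta x y) alpha.

Definition partC (X : choiceType) (C : pred X) (S : {fset X}) : {fset X} :=
  [fset x in S | C x].
Definition partY (X : choiceType) (C : pred X) (S : {fset X}) : {fset X} :=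
  [fset x in S | ~~ C x].
Definition trunc (R : realType) (X : choiceType) (r : X -> R) (t : R)
  (S : {fset X}) : {fset X} :=
  [fset x in S | r x <= t].

(** The metric [d_theta] is glued from [beta] on [C], [d_reg] on its
    complement, and the radius [max (r_C x) (r_Y y)] between the two pieces.
    A finite set of diameter [<= t] therefore either lies in one piece, where
    [d_theta] is the piece's own metric, or meets both pieces; in the latter
    case a single cross distance [<= t] already forces [r_C <= t] on its
    [C]-part and [r_Y <= t] on its other part, and conversely any two such
    truncated simplices are at cross distance [<= t] from each other. *)
From Stdlib Require Import FunctionalExtensionality PropExtensionality.
From HB Require Import structures.
From mathcomp Require Import all_boot all_order all_algebra.
From mathcomp Require Import finmap.
From mathcomp Require Import reals exp.
Set Implicit Arguments. Unset Strict Implicit. Unset Printing Implicit Defensive.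
Import Order.TTheory GRing.Theory Num.Theory.
Local Open Scope ring_scope.
Local Open Scope fset_scope.

Section VietorisRips.
Variables (R : realType) (X : choiceType).
Implicit Types (d : X -> X -> R) (t : R) (S T u v : {fset X}).

Lemma VR_subface d t S u v :
  v != fset0 -> v `<=` u -> VR d t S u -> VR d t S v.
Proof.
move=> v0 /fsubsetP vu [_ uS ud]; split => //.
  by apply/fsubsetP => x /vu /(fsubsetP uS).
by move=> x y /vu xu /vu yu; apply: ud.
Qed.

Lemma VR_fsubset d t S T u : u `<=` T -> VR d t S u -> VR d t T u.
Proof. by move=> uT [u0 _ ud]. Qed.

Lemma VR_mono d t S T u : S `<=` T -> VR d t S u -> VR d t T u.
Proof. by move=> ST [u0 uS ud]; split=> //; apply: fsubset_trans ST. Qed.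

Lemma eq_in_VR d d' t S u :
  {in S &, d =2 d'} -> VR d t S u <-> VR d' t S u.
Proof.
move=> dd'; split=> -[u0 /fsubsetP uS ud]; split => //; try exact/fsubsetP.
  by move=> x y xu yu; rewrite -dd' ?uS ?ud.
by move=> x y xu yu; rewrite dd' ?uS ?ud.
Qed.

Lemma VR_fsetU d t S u v :
  VR d t S u -> VR d t S v ->
  {in u & v, forall x y, d x y <= t /\ d y x <= t} -> VR d t S (u `|` v).
Proof.
move=> [u0 uS ud] [_ vS vd] uvd; split.
- by apply: contraNneq u0 => /eqP; rewrite fsetU_eq0 => /andP[/eqP ->].
- by rewrite fsubUset uS vS.
- move=> x y; rewrite !inE => /orP[xu|xv] /orP[yu|yv]; first exact: ud.
  + by case: (uvd x y xu yv).
  + by case: (uvd y x yu xv).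
  + exact: vd.
Qed.

End VietorisRips.

Section TwoPieceMetric.
Variables (R : realType) (X : choiceType) (C : pred X).
Variables (d dC dY : X -> X -> R) (rC rY : X -> R).
Hypothesis d_CC : forall x y, C x -> C y -> d x y = dC x y.
Hypothesis d_YY : forall x y, ~~ C x -> ~~ C y -> d x y = dY x y.
Hypothesis d_CY : forall x y, C x -> ~~ C y -> d x y = Num.max (rC x) (rY y).
Hypothesis d_YC : forall x y, C x -> ~~ C y -> d y x = Num.max (rC x) (rY y).
Implicit Types (t : R) (S T u : {fset X}).

Lemma in_partC S x : (x \in partC C S) = (x \in S) && C x.
Proof. by rewrite !inE. Qed.

Lemma in_partY S x : (x \in partY C S) = (x \in S) && ~~ C x.
Proof. by rewrite !inE. Qed.

Lemma in_trunc (r : X -> R) t S x : (x \in trunc r t S) = (x \in S) && (r x <= t).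
Proof. by rewrite !inE. Qed.

Lemma partC_fsubset S : partC C S `<=` S.
Proof. by apply/fsubsetP => x; rewrite in_partC => /andP[]. Qed.

Lemma partY_fsubset S : partY C S `<=` S.
Proof. by apply/fsubsetP => x; rewrite in_partY => /andP[]. Qed.

Lemma trunc_fsubset (r : X -> R) t S : trunc r t S `<=` S.
Proof. by apply/fsubsetP => x; rewrite in_trunc => /andP[]. Qed.

Lemma partC_partY_partition S : S = partC C S `|` partY C S.
Proof. by apply/fsetP => x; rewrite in_fsetU in_partC in_partY -andb_orr orbN andbT. Qed.

Lemma VR_onC T : {subset T <= C} -> forall t u, VR dC t T u <-> VR d t T u.
Proof. by move=> TC t u; apply: eq_in_VR => x y /TC Cx /TC Cy; rewrite d_CC. Qed.

Lemma VR_onY T :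
  {subset T <= predC C} -> forall t u, VR dY t T u <-> VR d t T u.
Proof. by move=> TY t u; apply: eq_in_VR => x y /TY Cx /TY Cy; rewrite d_YY. Qed.

Lemma partC_subC S : {subset partC C S <= C}.
Proof. by move=> x; rewrite in_partC => /andP[]. Qed.

Lemma partY_subY S : {subset partY C S <= predC C}.
Proof. by move=> x; rewrite in_partY => /andP[]. Qed.

Lemma trunc_partC_subC (r : X -> R) t S : {subset trunc r t (partC C S) <= C}.
Proof. by move=> x /(fsubsetP (trunc_fsubset _ _ _)) /partC_subC. Qed.

Lemma trunc_partY_subY (r : X -> R) t S :
  {subset trunc r t (partY C S) <= predC C}.
Proof. by move=> x /(fsubsetP (trunc_fsubset _ _ _)) /partY_subY. Qed.

Lemma radii_le_cross t x y :
  C x -> ~~ C y -> d x y <= t -> rC x <= t /\ rY y <= t.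
Proof. by move=> Cx Cy; rewrite d_CY // ge_max => /andP[]. Qed.

Lemma VR_in_partC t S u :
  VR d t S u -> partY C u = fset0 -> VR dC t (partC C S) u.
Proof.
move=> uVR uY0; have [_ /fsubsetP uS _] := uVR.
apply/(VR_onC (@partC_subC S)); apply: VR_fsubset uVR.
rewrite [u]partC_partY_partition uY0 fsetU0.
by apply/fsubsetP => x; rewrite !in_partC => /andP[/uS -> ->].
Qed.

Lemma VR_in_partY t S u :
  VR d t S u -> partC C u = fset0 -> VR dY t (partY C S) u.
Proof.
move=> uVR uC0; have [_ /fsubsetP uS _] := uVR.
apply/(VR_onY (@partY_subY S)); apply: VR_fsubset uVR.
rewrite [u]partC_partY_partition uC0 fset0U.
by apply/fsubsetP => x; rewrite !in_partY => /andP[/uS -> ->].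
Qed.

Lemma VR_mixed_partC t S u :
  VR d t S u -> partC C u != fset0 -> partY C u != fset0 ->
  VR dC t (trunc rC t (partC C S)) (partC C u).
Proof.
move=> uVR uC0 /fset0Pn[y]; rewrite in_partY => /andP[yu Cy].
have [_ /fsubsetP uS ud] := uVR.
apply/(VR_onC (@trunc_partC_subC rC t S)).
apply: VR_fsubset (VR_subface uC0 (partC_fsubset u) uVR).
apply/fsubsetP => x; rewrite in_partC in_trunc in_partC => /andP[xu Cx].
by rewrite uS // Cx; case: (radii_le_cross Cx Cy (ud x y xu yu)).
Qed.

Lemma VR_mixed_partY t S u :
  VR d t S u -> partC C u != fset0 -> partY C u != fset0 ->
  VR dY t (trunc rY t (partY C S)) (partY C u).
Proof.
move=> uVR /fset0Pn[x]; rewrite in_partC => /andP[xu Cx] uY0.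
have [_ /fsubsetP uS ud] := uVR.
apply/(VR_onY (@trunc_partY_subY rY t S)).
apply: VR_fsubset (VR_subface uY0 (partY_fsubset u) uVR).
apply/fsubsetP => y; rewrite in_partY in_trunc in_partY => /andP[yu Cy].
by rewrite uS // Cy; case: (radii_le_cross Cx Cy (ud x y xu yu)).
Qed.

Lemma trunc_cross_le t S x y :
  x \in trunc rC t (partC C S) -> y \in trunc rY t (partY C S) ->
  d x y <= t /\ d y x <= t.
Proof.
rewrite !in_trunc in_partC in_partY => /andP[/andP[_ Cx] rCx] /andP[/andP[_ Cy] rYy].
by rewrite d_CY // d_YC // ge_max rCx rYy.
Qed.

Lemma VR_join_truncated t S u :
  join (VR dC t (trunc rC t (partC C S))) (VR dY t (trunc rY t (partY C S))) u ->
  VR d t S u.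
Proof.
move=> [v [w [vVR wVR _ _ ->]]].
have [_ /fsubsetP vT _] := vVR; have [_ /fsubsetP wT _] := wVR.
move/(VR_onC (@trunc_partC_subC rC t S))/(VR_mono (trunc_fsubset _ _ _)): vVR.
move/(VR_mono (partC_fsubset S)) => vVR.
move/(VR_onY (@trunc_partY_subY rY t S))/(VR_mono (trunc_fsubset _ _ _)): wVR.
move/(VR_mono (partY_fsubset S)) => wVR.
by apply: VR_fsetU vVR wVR _ => x y /vT xT /wT yT; exact: trunc_cross_le xT yT.
Qed.

Lemma VR_partC_sub t S u : VR dC t (partC C S) u -> VR d t S u.
Proof.
by move/(VR_onC (@partC_subC S))/(VR_mono (partC_fsubset S)).
Qed.

Lemma VR_partY_sub t S u : VR dY t (partY C S) u -> VR d t S u.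
Proof.
by move/(VR_onY (@partY_subY S))/(VR_mono (partY_fsubset S)).
Qed.

Lemma VR_two_piece t S :
  VR d t S =
  cunion (cunion (VR dC t (partC C S)) (VR dY t (partY C S)))
         (join (VR dC t (trunc rC t (partC C S))) (VR dY t (trunc rY t (partY C S)))).
Proof.
apply: functional_extensionality => u; apply: propositional_extensionality.
split; last by case=> [[/VR_partC_sub | /VR_partY_sub] | /VR_join_truncated].
move=> uVR.
have [uY0 | uY_neq0] := eqVneq (partY C u) fset0.
  by left; left; apply: VR_in_partC.
have [uC0 | uC_neq0] := eqVneq (partC C u) fset0.
  by left; right; apply: VR_in_partY.
right; exists (partC C u), (partY C u); split => //.
- exact: VR_mixed_partC.
- exact: VR_mixed_partY.
- exact: partC_partY_partition.
Qed.

End TwoPieceMetric.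

Theorem corollary6p7 (R : realType) (X : choiceType) (C : pred X)
  (beta delta_reg dtheta : X -> X -> R) (theta zero : X) (lam alpha : R)
  (hlam : 0 < lam) (halpha : 0 < alpha <= 1)
  (hCC : forall x y, C x -> C y -> dtheta x y = beta x y)
  (hYY : forall x y, ~~ C x -> ~~ C y ->
          dtheta x y = dreg lam alpha delta_reg x y)
  (hCY : forall x y, C x -> ~~ C y ->
          dtheta x y = Num.max (beta x theta) (dreg lam alpha delta_reg y zero))
  (hYC : forall x y, C x -> ~~ C y ->
          dtheta y x = Num.max (beta x theta) (dreg lam alpha delta_reg y zero))
  (S : {fset X}) (t : R) (ht : 0 <= t) :
  VR dtheta t S =
  cunion (cunion (VR beta t (partC C S))
                 (VR (dreg lam alpha delta_reg) t (partY C S)))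
         (join (VR beta t (trunc (fun x => beta x theta) t (partC C S)))
               (VR (dreg lam alpha delta_reg) t
                   (trunc (fun y => dreg lam alpha delta_reg y zero) t (partY C S)))).
Proof.
exact: (VR_two_piece (rC := fun x => beta x theta)
                     (rY := fun y => dreg lam alpha delta_reg y zero) hCC hYY hCY hYC).
Qed.
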